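(* Let $\mathbf A=(A,\wedge,\vee,\cdot,\backslash,/,1)$ be an $r\ell u$-groupoid and let $(A^\star,\le^\star,\cdot^\star,1^\star)$ be constructed from it as described in the context. Then: (1) $(A^\star,\le^\star,\cdot^\star,1^\star)$ is a lattice-ordered unital groupoid, i.e. $\le^\star$ is a lattice order, $1^\star$ is a two-sided unit for $\cdot^\star$, and $x\le^\star y$ implies $x\cdot^\star z\le^\star y\cdot^\star z$ and $z\cdot^\star x\le^\star z\cdot^\star y$; (2) for all $x,y,z\in A^\star$: $x\cdot^\star y\le^\star z$ iff ${\sim}z\cdot^\star x\le^\star{\sim}y$ iff $y\cdot^\star{\sim}z\le^\star{\sim}x$.
   Context: An $r\ell u$-groupoid is an algebra $(A,\wedge,\vee,\cdot,\backslash,/,1)$ with $(A,\wedge,\vee)$ a lattice (order $\le$), $(A,\cdot,1)$ a unital groupoid (not necessarily associative), and $x\cdot y\le z\iff y\le x\backslash z\iff x\le z/y$. Construction: $A^\star=A\cup A^\sim\cup\{\top,\bot\}$, where $A^\sim=\{x^\sim\mid x\in A\}$ is a disjoint bijective copy of $A$ and $\top,\bot$ are two new elements. Multiplication: for $x,y\in A$ and $z\in A^\star$: $x\cdot^\star y=x\cdot y$; $x\cdot^\star y^\sim=(y/x)^\sim$; $x^\sim\cdot^\star y=(y\backslash x)^\sim$; $x^\sim\cdot^\star y^\sim=\top$; $z\cdot^\star\top=\top\cdot^\star z=\top$ if $z\neq\bot$ and $=\bot$ if $z=\bot$; $z\cdot^\star\bot=\bot\cdot^\star z=\bot$. Order $\le^\star$: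 extends $\le$ on $A$; $\bot<^\star x<^\star y^\sim<^\star\top$ for all $x,y\in A$; $x^\sim\le^\star y^\sim$ iff $y\le x$. $1^\star=1$. The map ${\sim}$ on $A^\star$: ${\sim}x=x^\sim$ for $x\in A$; ${\sim}(y^\sim)=y$ for $y\in A$; ${\sim}\top=\bot$; ${\sim}\bot=\top$. *)

Set Implicit Arguments.

Section RLU.
Variable A : Type.
Variables (meet join mul ldiv rdiv : A -> A -> A) (one : A).

Definition lat_le (x y : A) : Prop := meet x y = x.

Record is_rlu_groupoid : Prop := {
  meet_assoc : forall x y z, meet x (meet y z) = meet (meet x y) z;
  join_assoc : forall x y z, join x (join y z) = join (join x y) z;
  meet_comm  : forall x y, meet x y = meet y x;
  join_comm  : forall x y, join x y = join y x;
  meet_absorb : forall x y, meet x (join x y) = x;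
  join_absorb : forall x y, join x (meet x y) = x;
  mul_one_l : forall x, mul one x = x;
  mul_one_r : forall x, mul x one = x;
  resid_l : forall x y z, lat_le (mul x y) z <-> lat_le y (ldiv x z);
  resid_r : forall x y z, lat_le (mul x y) z <-> lat_le x (rdiv z y)
}.

(* The construction A* = A ∪ A~ ∪ {Top, Bot} *)
Inductive star : Type :=
| Inj : A -> star
| Tld : A -> star
| Top : star
| Bot : star.

Definition star_one : star := Inj one.

Definition star_mul (u v : star) : star :=
  match u, v with
  | Bot, _ => Bot
  | _, Bot => Bot
  | Top, _ => Top
  | _, Top => Top
  | Inj x, Inj y => Inj (mul x y)
  | Inj x, Tld y => Tld (rdiv y x)
  | Tld x, Inj y => Tld (ldiv y x)
  | Tld _, Tld _ => Top
  end.

Definition star_le (u v : star) : Prop :=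
  match u, v with
  | Bot, _ => True
  | _, Top => True
  | Inj x, Inj y => lat_le x y
  | Inj _, Tld _ => True
  | Tld x, Tld y => lat_le y x
  | _, _ => False
  end.

Definition star_neg (u : star) : star :=
  match u with
  | Inj x => Tld x
  | Tld x => Inj x
  | Top => Bot
  | Bot => Top
  end.

End RLU.

Definition is_lattice_order (T : Type) (le : T -> T -> Prop) : Prop :=
  (forall x, le x x) /\
  (forall x y, le x y -> le y x -> x = y) /\
  (forall x y z, le x y -> le y z -> le x z) /\
  (forall x y, exists j, le x j /\ le y j /\ forall z, le x z -> le y z -> le j z) /\
  (forall x y, exists m, le m x /\ le m y /\ forall z, le z x -> le z y -> le z m).

(** Residuation makes multiplication on [A] monotone and the divisions
    monotone in the numerator and antitone in the denominator.  The order of [A*] stacks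
    [Bot < A < A~ < Top] with [A~] ordered dually, so suprema and infima are
    computed piecewise.  Monotonicity of the new multiplication reduces to
    that of [*], [\] and [/] on [A].  The rotation law (2) is, on the summands
    [A] and [A~], just the chain [x * y <= z <-> y <= x \ z <-> x <= z / y]
    read off through the definitions [x . y~ = (y/x)~] and [x~ . y = (y\x)~];
    the cases involving [Top] and [Bot] are immediate. *)
From Stdlib Require Import Setoid.

Set Implicit Arguments.

Section RluGroupoid.
Variable A : Type.
Variables (meet join mul ldiv rdiv : A -> A -> A) (one : A).
Hypothesis HA : is_rlu_groupoid meet join mul ldiv rdiv one.

Local Notation "x ≤ y" := (lat_le meet x y) (at level 70).

Lemma lat_le_refl x : x ≤ x.
Proof. unfold lat_le; rewrite <- (join_absorb HA x x) at 2; apply (meet_absorb HA). Qed.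

Lemma lat_le_antisym x y : x ≤ y -> y ≤ x -> x = y.
Proof.
  unfold lat_le; intros Hxy Hyx.
  rewrite <- Hxy, <- Hyx at 1; rewrite (meet_comm HA); congruence.
Qed.

Lemma lat_le_trans x y z : x ≤ y -> y ≤ z -> x ≤ z.
Proof. unfold lat_le; intros Hxy Hyz; rewrite <- Hxy, <- (meet_assoc HA), Hyz; reflexivity. Qed.

Lemma join_l x y : x ≤ join x y.
Proof. apply (meet_absorb HA). Qed.

Lemma join_r x y : y ≤ join x y.
Proof. rewrite (join_comm HA); apply join_l. Qed.

Lemma join_idPr x y : x ≤ y -> join x y = y.
Proof. unfold lat_le; intro Hxy; rewrite (join_comm HA), <- Hxy, (meet_comm HA); apply (join_absorb HA). Qed.

Lemma join_le x y z : x ≤ z -> y ≤ z -> join x y ≤ z.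
Proof.
  intros Hxz Hyz.
  assert (Hjz : join (join x y) z = z).
  { rewrite <- (join_assoc HA), (join_idPr Hyz), (join_idPr Hxz); reflexivity. }
  unfold lat_le; rewrite <- Hjz at 1; apply (meet_absorb HA).
Qed.

Lemma meet_l x y : meet x y ≤ x.
Proof. unfold lat_le; rewrite (meet_comm HA x y), <- (meet_assoc HA), lat_le_refl; reflexivity. Qed.

Lemma meet_r x y : meet x y ≤ y.
Proof. unfold lat_le; rewrite <- (meet_assoc HA), lat_le_refl; reflexivity. Qed.

Lemma le_meet x y z : z ≤ x -> z ≤ y -> z ≤ meet x y.
Proof. unfold lat_le; intros Hzx Hzy; rewrite (meet_assoc HA), Hzx, Hzy; reflexivity. Qed.

Lemma ldiv_rdiv_iff x y z : y ≤ ldiv x z <-> x ≤ rdiv z y.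
Proof. rewrite <- (resid_l HA), (resid_r HA); reflexivity. Qed.

Lemma mul_le_mul_r x y z : x ≤ y -> mul x z ≤ mul y z.
Proof. intro Hxy; apply (resid_r HA), (lat_le_trans Hxy), (resid_r HA), lat_le_refl. Qed.

Lemma mul_le_mul_l x y z : x ≤ y -> mul z x ≤ mul z y.
Proof. intro Hxy; apply (resid_l HA), (lat_le_trans Hxy), (resid_l HA), lat_le_refl. Qed.

Lemma ldiv_le_ldiv_r x y z : x ≤ y -> ldiv z x ≤ ldiv z y.
Proof.
  intro Hxy; apply (resid_l HA); apply lat_le_trans with x; [|exact Hxy].
  apply (resid_l HA), lat_le_refl.
Qed.

Lemma ldiv_le_ldiv_l x y z : x ≤ y -> ldiv y z ≤ ldiv x z.
Proof.
  intro Hxy; apply (resid_l HA); apply lat_le_trans with (mul y (ldiv y z)).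
  - apply mul_le_mul_r, Hxy.
  - apply (resid_l HA), lat_le_refl.
Qed.

Lemma rdiv_le_rdiv_l x y z : x ≤ y -> rdiv x z ≤ rdiv y z.
Proof.
  intro Hxy; apply (resid_r HA); apply lat_le_trans with x; [|exact Hxy].
  apply (resid_r HA), lat_le_refl.
Qed.

Lemma rdiv_le_rdiv_r x y z : x ≤ y -> rdiv z y ≤ rdiv z x.
Proof.
  intro Hxy; apply (resid_r HA); apply lat_le_trans with (mul (rdiv z y) y).
  - apply mul_le_mul_l, Hxy.
  - apply (resid_r HA), lat_le_refl.
Qed.

Lemma rdiv1 x : rdiv x one = x.
Proof.
  apply lat_le_antisym.
  - rewrite <- (mul_one_r HA (rdiv x one)); apply (resid_r HA), lat_le_refl.
  - apply (resid_r HA); rewrite (mul_one_r HA); apply lat_le_refl.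
Qed.

Lemma ldiv1 x : ldiv one x = x.
Proof.
  apply lat_le_antisym.
  - rewrite <- (mul_one_l HA (ldiv one x)); apply (resid_l HA), lat_le_refl.
  - apply (resid_l HA); rewrite (mul_one_l HA); apply lat_le_refl.
Qed.

Local Notation "u ≤* v" := (star_le meet u v) (at level 70).
Local Notation "u ⋅ v" := (star_mul mul ldiv rdiv u v) (at level 40).

Definition star_join (u v : star A) : star A :=
  match u, v with
  | Bot _, w | w, Bot _ => w
  | Top _, _ | _, Top _ => Top A
  | Inj a, Inj b => Inj (join a b)
  | Inj _, Tld b => Tld b
  | Tld a, Inj _ => Tld a
  | Tld a, Tld b => Tld (meet a b)
  end.

Definition star_meet (u v : star A) : star A :=
  match u, v with
  | Top _, w | w, Top _ => w
  | Bot _, _ | _, Bot _ => Bot A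
  | Inj a, Inj b => Inj (meet a b)
  | Inj a, Tld _ => Inj a
  | Tld _, Inj b => Inj b
  | Tld a, Tld b => Tld (join a b)
  end.

Local Hint Resolve lat_le_refl join_l join_r join_le meet_l meet_r le_meet : core.

Lemma star_le_refl u : u ≤* u.
Proof. destruct u; simpl; auto. Qed.

Lemma star_le_antisym u v : u ≤* v -> v ≤* u -> u = v.
Proof.
  destruct u, v; simpl; try tauto; intros Huv Hvu; f_equal; apply lat_le_antisym; auto.
Qed.

Lemma star_le_trans u v w : u ≤* v -> v ≤* w -> u ≤* w.
Proof. destruct u, v, w; simpl; try tauto; eauto using lat_le_trans. Qed.

Lemma star_join_l u v : u ≤* star_join u v.
Proof. destruct u, v; simpl; auto. Qed.

Lemma star_join_r u v : v ≤* star_join u v.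
Proof. destruct u, v; simpl; auto. Qed.

Lemma star_join_le u v w : u ≤* w -> v ≤* w -> star_join u v ≤* w.
Proof. destruct u, v, w; simpl; auto. Qed.

Lemma star_meet_l u v : star_meet u v ≤* u.
Proof. destruct u, v; simpl; auto. Qed.

Lemma star_meet_r u v : star_meet u v ≤* v.
Proof. destruct u, v; simpl; auto. Qed.

Lemma star_le_meet u v w : w ≤* u -> w ≤* v -> w ≤* star_meet u v.
Proof. destruct u, v, w; simpl; auto. Qed.

Lemma star_le_lattice_order : is_lattice_order (star_le meet).
Proof.
  split; [exact star_le_refl|].
  split; [exact star_le_antisym|].
  split; [exact star_le_trans|].
  split; intros u v.
  - exists (star_join u v); auto using star_join_l, star_join_r, star_join_le.
  - exists (star_meet u v); auto using star_meet_l, star_meet_r, star_le_meet.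
Qed.

Lemma star_mul1u u : star_one one ⋅ u = u.
Proof. destruct u; simpl; rewrite ?(mul_one_l HA), ?rdiv1; reflexivity. Qed.

Lemma star_mulu1 u : u ⋅ star_one one = u.
Proof. destruct u; simpl; rewrite ?(mul_one_r HA), ?ldiv1; reflexivity. Qed.

Lemma star_mul_le_mul_r u v w : u ≤* v -> u ⋅ w ≤* v ⋅ w.
Proof.
  destruct u, v, w; simpl; try tauto;
    auto using mul_le_mul_r, ldiv_le_ldiv_r, rdiv_le_rdiv_r.
Qed.

Lemma star_mul_le_mul_l u v w : u ≤* v -> w ⋅ u ≤* w ⋅ v.
Proof.
  destruct u, v, w; simpl; try tauto;
    auto using mul_le_mul_l, ldiv_le_ldiv_l, rdiv_le_rdiv_l.
Qed.

Lemma star_negK (u : star A) : star_neg (star_neg u) = u.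
Proof. destruct u; reflexivity. Qed.

Lemma star_mul_le_rotate u v w : u ⋅ v ≤* w <-> star_neg w ⋅ u ≤* star_neg v.
Proof.
  destruct u, v, w; simpl; try tauto;
    rewrite ?(resid_l HA), ?ldiv_rdiv_iff; reflexivity.
Qed.

End RluGroupoid.

Theorem mainTheorem13 (A : Type) (meet join mul ldiv rdiv : A -> A -> A) (one : A)
  (HA : is_rlu_groupoid meet join mul ldiv rdiv one) :
  let le := star_le meet in
  let m := star_mul mul ldiv rdiv in
  let e := star_one one in
  (* (1) lattice-ordered unital groupoid *)
  (is_lattice_order le /\
   (forall x, m e x = x) /\ (forall x, m x e = x) /\
   (forall x y z, le x y -> le (m x z) (m y z) /\ le (m z x) (m z y))) /\
  (* (2) *)
  (forall x y z,
     (le (m x y) z <-> le (m (star_neg z) x) (star_neg y)) /\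
     (le (m (star_neg z) x) (star_neg y) <-> le (m y (star_neg z)) (star_neg x))).
Proof.
  intros le m e; subst le m e; split.
  - split; [exact (star_le_lattice_order HA)|].
    split; [exact (star_mul1u HA)|].
    split; [exact (star_mulu1 HA)|].
    intros x y z Hxy.
    split; [apply (star_mul_le_mul_r HA) | apply (star_mul_le_mul_l HA)]; exact Hxy.
  - intros x y z; split; [apply (star_mul_le_rotate HA)|].
    rewrite (star_mul_le_rotate HA (star_neg z) x (star_neg y)), star_negK.
    reflexivity.
Qed.
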